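(* Let $n\ge 3$ and let $C_n$ be the cycle with vertices $v_1,\dots,v_n$ and edges $v_1v_2,v_2v_3,\dots,v_{n-1}v_n,v_nv_1$. Then $P_{\{v_1\}}(C_n)=\tfrac34$.
   Context: Classical zero forcing: given a set of black vertices (the rest white), the color change rule turns a white vertex $v$ black if $v$ is the only white neighbor of some black vertex $u$. A set $S$ is a zero forcing set if starting with $S$ black, finitely many applications of this rule make all of $V(G)$ black. Probabilistic process: for a vertex $u$, $N(u)$ is its open neighborhood, $N[u]=N(u)\cup\{u\}$, $\deg(u)=|N(u)|$. Given a current black set $Z$, $F(u\to v)=0$ if $u\notin Z$, or $v\notin N(u)$, or $N[u]\subseteq Z$; otherwise $F(u\to v)=|N[u]\cap Z|/\deg(u)$. One global application of the probabilistic color change rule: black vertices stay black; independently for every pair $(u,v)$ with $u$ black and $v\in N(u)$ white, $u$ forces $v$ with probability $F(u\to v)$; a white vertex becomes black iff some black neighbor forces it. Starting with black set $A$ at step $0$ and applying this rule repeatedly, let $S^k$ be the set of colorings reachable with positive probability after exactly $k$ steps and $P^{(k)}$ the probability distribution on them. Let $T^k\subseteq S^k$ be the colorings whose black set contains a classical zero forcing set of $G$. Define $P_A(G)=P^{(k_0)}(T^{k_0})$ where $k_0$ is the least $k\ge 0$ with $T^k\neq\emptyset$. *)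

(* Probabilistic zero forcing on a finite simple graph,
   given as a relation e on a finType T (symmetric, irreflexive). *)
From HB Require Import structures.
From mathcomp Require Import all_boot all_order all_algebra.
Set Implicit Arguments. Unset Strict Implicit. Unset Printing Implicit Defensive.
Import GRing.Theory Num.Theory.
Local Open Scope ring_scope.

Definition nbhd (T : finType) (e : rel T) (u : T) : {set T} := [set v | e u v].
Definition deg (T : finType) (e : rel T) (u : T) : nat := #|nbhd e u|.
Definition cnbhd (T : finType) (e : rel T) (u : T) : {set T} := u |: nbhd e u.

Definition cc_step (T : finType) (e : rel T) (Z : {set T}) : {set T} :=
  Z :|: [set v | [exists u in Z, e u v && (nbhd e u :\: Z == [set v])]].

Definition zero_forcing_set (T : finType) (e : rel T) (S : {set T}) : Prop :=
  exists k : nat, iter k (cc_step e) S = [set: T].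

Definition contains_zfs (T : finType) (e : rel T) (Z : {set T}) : Prop :=
  exists S : {set T}, S \subset Z /\ zero_forcing_set e S.

Definition force_prob (T : finType) (e : rel T) (Z : {set T}) (u v : T) : rat :=
  if (u \in Z) && e u v && ~~ (cnbhd e u \subset Z)
  then (#|cnbhd e u :&: Z|)%:R / (deg e u)%:R
  else 0.

Definition not_forced (T : finType) (e : rel T) (Z : {set T}) (v : T) : rat :=
  \prod_(u in Z | e u v) (1 - force_prob e Z u v).

Definition trans (T : finType) (e : rel T) (Z Z' : {set T}) : rat :=
  if Z \subset Z' then
    \prod_(v in ~: Z) (if v \in Z' then 1 - not_forced e Z v else not_forced e Z v)
  else 0.

Fixpoint dist (T : finType) (e : rel T) (A : {set T}) (k : nat) (Z : {set T}) : rat :=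
  match k with
  | 0 => (Z == A)%:R
  | k'.+1 => \sum_(Y : {set T}) dist e A k' Y * trans e Y Z
  end.

Definition reachable (T : finType) (e : rel T) (A : {set T}) (k : nat) (Z : {set T}) : Prop :=
  0 < dist e A k Z.

(* P_A(G) = p : with k0 the least k for which T^k is nonempty,
   P^{(k0)}(T^{k0}) = p *)
Definition PA_eq (T : finType) (e : rel T) (A : {set T}) (p : rat) : Prop :=
  exists k0 : nat,
    (exists Z, reachable e A k0 Z /\ contains_zfs e Z) /\
    (forall k, (k < k0)%N -> forall Z, reachable e A k Z -> ~ contains_zfs e Z) /\
    (exists Tk : {set {set T}},
        (forall Z, Z \in Tk <-> (reachable e A k0 Z /\ contains_zfs e Z)) /\
        \sum_(Z in Tk) dist e A k0 Z = p).

(* the cycle C_n on vertices 'I_n (vertex v_i is the ordinal i-1):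
   i ~ j iff j = i+1 mod n or i = j+1 mod n *)
Definition cycle_graph (n : nat) : rel 'I_n :=
  fun i j => ((val j == (val i).+1 %% n) || (val i == (val j).+1 %% n))%N.
Arguments cycle_graph n : clear implicits.

(* The argument follows the probabilistic process round by round.
   - General facts about the color change rule: a black vertex with a single
     white neighbour forces it, and a set in which no black vertex has exactly
     one white neighbour is stuck, hence not zero forcing unless it is
     everything.  In particular a loopless vertex of degree >= 2 on its own
     contains no zero forcing set.
   - General facts about one probabilistic round from a single black vertex u:
     the neighbours of u turn black independently with probability 1/deg u.
   - On the cycle, v_1 has the two neighbours v_2 and v_n, so after one round
     each of the four sets {v_1} + X, X a subset of {v_2, v_n}, has
     probability 1/4, and v_1 together with any neighbour forces the whole
     cycle along increasing indices.
   Hence k_0 = 1, T^1 consists of the three sets with X nonempty, and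
   P_{v_1}(C_n) = 3/4. *)

From HB Require Import structures.
From mathcomp Require Import all_boot all_order all_algebra.
From mathcomp Require Import zify.
Import Order.TTheory GRing.Theory Num.Theory.
Local Open Scope ring_scope.

Section ForcingFacts.
Variables (T : finType) (e : rel T).

Lemma cc_step_forces (Z : {set T}) (u v : T) :
  u \in Z -> e u v -> nbhd e u :\: Z \subset [set v] -> v \in cc_step e Z.
Proof.
move=> uZ euv sub; rewrite /cc_step inE; have [//|vZ] := boolP (v \in Z).
rewrite inE; apply/existsP; exists u; rewrite uZ euv eqEsubset sub /=.
by rewrite sub1set !inE vZ.
Qed.

Lemma cc_step_stalled (S : {set T}) :
  (forall u, u \in S -> #|nbhd e u :\: S| != 1%N) -> cc_step e S = S.
Proof.
move=> stuck; apply/setP => v; rewrite /cc_step inE orb_idr // inE.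
case/existsP=> u /andP [uS /andP [_ /eqP hN]].
by have := stuck u uS; rewrite hN cards1.
Qed.

Lemma stalled_not_zfs (S : {set T}) :
  cc_step e S = S -> S != [set: T] -> ~ zero_forcing_set e S.
Proof.
move=> fixS /eqP notT [k]; suff -> : iter k (cc_step e) S = S by [].
by elim: k => //= k ->.
Qed.

(* A loopless vertex of degree at least 2 on its own contains no zero
   forcing set: every subset of it is stuck and misses its neighbours. *)
Lemma singleton_no_zfs (u : T) :
  ~~ e u u -> (1 < deg e u)%N -> ~ contains_zfs e [set u].
Proof.
move=> irr deg_gt1 [S [subS zfsS]].
have nbhdS : nbhd e u :\: S = nbhd e u.
  by apply/setDidPl/(disjointWr subS); rewrite disjoint_sym disjoints1 inE.
apply: stalled_not_zfs zfsS.
  apply: cc_step_stalled => x /(subsetP subS) /set1P ->.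
  by rewrite nbhdS gtn_eqF.
have /card_gt0P [v vN] : (0 < #|nbhd e u|)%N by apply: ltnW.
by apply/eqP => ST; move: vN; rewrite -nbhdS ST setDT inE.
Qed.

Lemma dist_one (A Z : {set T}) : dist e A 1 Z = trans e A Z.
Proof.
rewrite /= (bigD1 A) //= eqxx mul1r big1 ?addr0 // => Y /negbTE ->.
by rewrite mul0r.
Qed.

Lemma not_forced_singleton (u v : T) :
  ~~ (cnbhd e u \subset [set u]) ->
  not_forced e [set u] v = if e u v then 1 - (deg e u)%:R^-1 else 1.
Proof.
move=> notsub; rewrite /not_forced big_mkcondr big_set1; case: ifP => // euv.
rewrite /force_prob set11 euv (negbTE notsub) /=.
have -> : cnbhd e u :&: [set u] = [set u].
  by apply/setIidPr; rewrite sub1set /cnbhd setU11.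
by rewrite cards1 mul1r.
Qed.

Lemma trans_singleton (u : T) (Z : {set T}) :
  ~~ e u u -> (0 < deg e u)%N ->
  trans e [set u] Z =
    if (u \in Z) && (Z \subset cnbhd e u) then
      \prod_(v in nbhd e u) (if v \in Z then (deg e u)%:R^-1 else 1 - (deg e u)%:R^-1)
    else 0.
Proof.
move=> irr /card_gt0P [w wN].
have ne_u v : e u v -> v != u by apply: contraTneq => ->.
have notsub : ~~ (cnbhd e u \subset [set u]).
  apply/subsetPn; exists w; first exact: setU1r.
  by move: wN; rewrite !inE => /ne_u.
rewrite /trans sub1set; case: (boolP (u \in Z)) => uZ //=.
rewrite (bigID (fun v => e u v)) /=.
under eq_bigr => v /andP [_ euv] do rewrite not_forced_singleton // euv subKr.
rewrite (eq_bigl (fun v => v \in nbhd e u)); last first.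
  by move=> v; rewrite /nbhd !inE; case euv: (e u v); rewrite ?andbT ?andbF ?ne_u.
case: (boolP (Z \subset cnbhd e u)) => subZ.
  rewrite [X in _ * X]big1 ?mulr1 // => v /andP [vu neuv].
  rewrite not_forced_singleton // (negbTE neuv); case: ifP => // vZ.
  by move: (subsetP subZ v vZ) vu; rewrite /cnbhd !inE (negbTE neuv) orbF => ->.
have /subsetPn [v vZ vN] := subZ.
move: vN; rewrite /cnbhd !inE negb_or => /andP [vu neuv].
rewrite [X in _ * X](bigD1 v) ?inE ?vu ?neuv //=.
by rewrite not_forced_singleton // (negbTE neuv) vZ subrr mul0r mulr0.
Qed.

End ForcingFacts.

Section CycleForcing.
Variable n : nat.
Hypothesis n_gt2 : (2 < n)%N.
Let e := cycle_graph n.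

Lemma succ_mod (x : nat) : (x < n)%N -> (x.+1 %% n = if x.+1 == n then 0 else x.+1)%N.
Proof.
move=> xn; case: eqP => [->|ne]; first by rewrite modnn.
by rewrite modn_small //; lia.
Qed.

Lemma cycle_edge_succ (m x : 'I_n) : x = m.+1 :> nat -> e m x.
Proof.
move=> xS; have := ltn_ord x; rewrite xS => lt_mn.
by rewrite /e /cycle_graph /= (modn_small lt_mn) xS eqxx.
Qed.

Lemma cycle_other_nbhd (m x : 'I_n) :
  (m.+1 < n)%N -> e m x -> x <> m.+1 :> nat ->
  (x < m)%N \/ (m = 0 :> nat /\ x = n.-1 :> nat).
Proof.
move=> mS; rewrite /e /cycle_graph /= !succ_mod //.
have := ltn_ord x; case: (m.+1 =P n) => [|_ x_lt]; first lia.
by case: (x.+1 =P n) => hx /orP [] /eqP; lia.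
Qed.

(* Vertex 0 together with one of its neighbours forces the whole cycle:
   after k rounds the vertices 0, ..., k are black. *)
Lemma cycle_zfs (S : {set 'I_n}) (z w : 'I_n) :
  z = 0 :> nat -> z \in S -> w \in S -> e z w -> zero_forcing_set e S.
Proof.
move=> z0 zS wS ezw.
have w_end : w = 1 :> nat \/ w = n.-1 :> nat.
  have w_lt := ltn_ord w; move: ezw.
  rewrite /e /cycle_graph /= z0 modn_small ?succ_mod //; last lia.
  by case: (w.+1 =P n) => hw /orP [] /eqP; lia.
have black_prefix k (j : 'I_n) : (j <= k)%N -> j \in iter k (cc_step e) S.
  elim: k j => [|k IH] j j_le.
    by have -> : j = z by apply: val_inj; rewrite /= z0; lia.
  rewrite [iter _ _ _]/=; set Z := iter k (cc_step e) S.
  have [jZ|jZ] := boolP (j \in Z); first by rewrite /cc_step inE jZ.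
  have j_eq : j = k.+1 :> nat.
    by case: (leqP j k) => [/IH jZ'|]; [rewrite jZ' in jZ | lia].
  have k_lt : (k < n)%N by have := ltn_ord j; lia.
  apply: (@cc_step_forces _ _ _ (Ordinal k_lt)); first exact: IH.
    exact: cycle_edge_succ.
  apply/subsetP => x; rewrite !inE => /andP [xZ emx]; move: xZ; apply: contraNT.
  move=> x_ne_j; have x_ne : x <> k.+1 :> nat.
    by move=> x_val; move: x_ne_j; rewrite -val_eqE /= x_val j_eq eqxx.
  have kS_lt : (k.+1 < n)%N by rewrite -j_eq.
  have [x_lt|[/= k0 x_last]] := @cycle_other_nbhd (Ordinal k_lt) x kS_lt emx x_ne.
    by apply: IH; move: x_lt => /=; lia.
  subst k; rewrite /Z /=; case: w_end => w_val.
    by move: jZ; rewrite /Z /= (_ : j = w) ?wS //; apply: val_inj; rewrite /= j_eq w_val.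
  by rewrite (_ : x = w) //; apply: val_inj; rewrite /= x_last w_val.
exists n.-1; apply/setP => j; rewrite inE; apply: black_prefix.
by have := ltn_ord j; lia.
Qed.

Variables v1 a b : 'I_n.
Hypotheses (v1_0 : v1 = 0 :> nat) (a_1 : a = 1 :> nat) (b_last : b = n.-1 :> nat).

Lemma cycle_nbhd0 : nbhd e v1 = [set a; b].
Proof.
apply/setP => v; rewrite /nbhd /e /cycle_graph !inE -!val_eqE /= v1_0 a_1 b_last.
rewrite modn_small ?succ_mod //; last lia.
have := ltn_ord v; case: (v.+1 =P n) => hv v_lt; lia.
Qed.

Lemma cycle_deg0 : deg e v1 = 2%N.
Proof.
have a_ne_b : a != b by rewrite -val_eqE /= a_1 b_last; apply/eqP; lia.
by rewrite /deg cycle_nbhd0 cards2 a_ne_b.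
Qed.

Lemma cycle_loopless0 : ~~ e v1 v1.
Proof.
suff : v1 \notin nbhd e v1 by rewrite /nbhd inE.
rewrite cycle_nbhd0 !inE -!val_eqE /= v1_0 a_1 b_last.
by apply/norP; split; apply/eqP; lia.
Qed.

(* From {v_1}, each of v_2, v_n turns black with probability 1/2, so each
   of the four possible outcomes has probability 1/4. *)
Lemma dist_first_round (Z : {set 'I_n}) :
  dist e [set v1] 1 Z = if (v1 \in Z) && (Z \subset cnbhd e v1) then 4%:R^-1 else 0.
Proof.
rewrite dist_one trans_singleton ?cycle_loopless0 ?cycle_deg0 //; case: ifP => // _.
rewrite (eq_bigr (fun _ => 2%:R^-1)) => [|v _]; last by case: ifP.
by rewrite prodr_const -/(deg e v1) cycle_deg0.
Qed.

Lemma first_round_zfs (Z : {set 'I_n}) :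
  v1 \in Z -> Z :&: nbhd e v1 != set0 -> contains_zfs e Z.
Proof.
move=> v1Z /set0Pn [w]; rewrite inE /nbhd inE => /andP [wZ ev1w].
by exists Z; split; last exact: (@cycle_zfs Z v1 w v1_0 v1Z wZ ev1w).
Qed.

Definition first_round_zfs_sets : {set {set 'I_n}} :=
  [set v1 |: X | X in [set X in powerset (nbhd e v1) | X != set0]].

Lemma mem_first_round_zfs_sets (Z : {set 'I_n}) :
  Z \in first_round_zfs_sets <-> reachable e [set v1] 1 Z /\ contains_zfs e Z.
Proof.
rewrite /reachable dist_first_round; split.
  case/imsetP => X; rewrite inE powersetE => /andP [XN X0] ->.
  have v1X := setU11 v1 X; split; first by rewrite v1X /cnbhd setUS.
  apply: first_round_zfs v1X _; have /set0Pn [x xX] := X0.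
  by apply/set0Pn; exists x; rewrite inE setU1r //= (subsetP XN).
case; case: ifP => [/andP [v1Z Zsub] _ zfsZ | _]; last by rewrite ltxx.
apply/imsetP; exists (Z :\ v1); last by rewrite setD1K.
rewrite inE powersetE subDset Zsub /=; apply/negP => /eqP Z0.
have Z1 : Z = [set v1] by rewrite -(setD1K v1Z) Z0 setU0.
by apply: (@singleton_no_zfs _ e v1 cycle_loopless0); [rewrite cycle_deg0 | rewrite -Z1].
Qed.

(* Three sets of probability 1/4 each. *)
Lemma mass_first_round_zfs_sets :
  \sum_(Z in first_round_zfs_sets) dist e [set v1] 1 Z = 3%:R / 4%:R.
Proof.
have v1N : v1 \notin nbhd e v1 by rewrite /nbhd inE cycle_loopless0.
rewrite big_imset; last first.
  move=> X Y; rewrite !inE => /andP [XN _] /andP [YN _] XY.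
  have v1X : v1 \notin X by apply: contra v1N; apply: (subsetP XN).
  have v1Y : v1 \notin Y by apply: contra v1N; apply: (subsetP YN).
  by rewrite -(setU1K v1X) XY setU1K.
rewrite (eq_bigr (fun _ => 4%:R^-1)) => [|X]; last first.
  by rewrite !inE => /andP [XN _]; rewrite dist_first_round setU11 /cnbhd setUS.
have card3 : #|powerset (nbhd e v1) :\ set0| = 3%N.
  have := cardsD1 set0 (powerset (nbhd e v1)).
  by rewrite card_powerset -/(deg e v1) cycle_deg0 powersetE sub0set => -[].
rewrite sumr_const (_ : [set X in _ | _] = powerset (nbhd e v1) :\ set0) ?card3 //.
by apply/setP => X; rewrite !inE andbC.
Qed.

Lemma start_has_no_zfs (Z : {set 'I_n}) :
  reachable e [set v1] 0 Z -> ~ contains_zfs e Z.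
Proof.
rewrite /reachable /= ltr0n lt0b => /eqP ->.
by apply: singleton_no_zfs cycle_loopless0 _; rewrite cycle_deg0.
Qed.

Lemma first_round_has_zfs :
  exists Z, reachable e [set v1] 1 Z /\ contains_zfs e Z.
Proof.
exists (cnbhd e v1); apply/mem_first_round_zfs_sets/imsetP.
exists (nbhd e v1) => //; rewrite !inE subxx -card_gt0.
by rewrite -/(deg e v1) cycle_deg0.
Qed.

End CycleForcing.

Theorem mainTheorem3 (n : nat) (hn : (3 <= n)%N) (v1 : 'I_n) (hv1 : val v1 = 0%N) :
  PA_eq (cycle_graph n) [set v1] (3%:R / 4%:R).
Proof.
have a_lt : (1 < n)%N by lia.
have b_lt : (n.-1 < n)%N by lia.
have a_1 : Ordinal a_lt = 1 :> nat by [].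
have b_last : Ordinal b_lt = n.-1 :> nat by [].
exists 1%N; split; [|split].
- exact: first_round_has_zfs hn v1 _ _ hv1 a_1 b_last.
- by case=> // _; exact: start_has_no_zfs hn v1 _ _ hv1 a_1 b_last.
- exists (first_round_zfs_sets n v1); split.
    exact: mem_first_round_zfs_sets hn v1 _ _ hv1 a_1 b_last.
  exact: mass_first_round_zfs_sets hn v1 _ _ hv1 a_1 b_last.
Qed.
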